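(* In the setting below, the measure $\mu_P^{(0)}$ is independent of the choice of the disintegrations $\gamma_p^\bullet$ and $\gamma_q^\bullet$: if $\widetilde{\gamma}_p^\bullet,\widetilde{\gamma}_q^\bullet$ is another such pair and $\widetilde{\mu}_P^{(0)}$ the corresponding measure, then $\widetilde{\mu}_P^{(0)}=\mu_P^{(0)}$.
   Context: Setting: $(S,\lambda_S^\bullet,\mu_S^{(0)})$, $(G,\lambda_G^\bullet,\mu_G^{(0)})$, $(T,\lambda_T^\bullet,\mu_T^{(0)})$ are Haar groupoids, i.e. second countable, locally compact, Hausdorff topological groupoids with continuous left Haar systems (systems of measures $\lambda^u$ concentrated on $r^{-1}(u)$, continuous in $u$ against continuous compactly supported $f\ge0$, left invariant $\lambda^{d(x)}(E)=\lambda^{r(x)}(x(E\cap r^{-1}(d(x))))$, positive on open sets meeting $r^{-1}(u)$) and non-zero quasi-invariant Radon measures $\mu^{(0)}$ on the unit spaces (the induced measure $\mu(E)=\int\lambda^u(E)d\mu^{(0)}(u)$ is equivalent to $E\mapsto\mu(E^{-1})$). $p:S\to G$, $q:T\to G$ are homomorphisms of Haar groupoids (continuous homomorphisms preserving the class of the induced measures). $\mu_G$ is the induced measure of $G$. $P^{(0)}=\{(s,g,t)\in S^{(0)}\times G\times T^{(0)}: r_G(g)=p(s),\ d_G(g)=q(t)\}$. A Borel system of measures (BSM) on a Borel map $\pi:X\to Y$ is a family $\{\gamma^y\}$ of positive Borel measures on $X$, $\gamma^y$ concentrated on $\pi^{-1}(y)$, $y\mapsto\gamma^y(E)$ Borel;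 locally finite (resp. locally bounded) if every point has a neighborhood $U$ with $\gamma^y(U)<\infty$ for all $y$ (resp. $\gamma^y(U)<C$ for all $y$, some constant $C$); a disintegration of $\mu$ w.r.t. $\nu$ if $\mu(E)=\int\gamma^y(E)d\nu(y)$. An admissible pair consists of a locally finite, locally bounded BSM $\gamma_p^\bullet$ on $p|_{S^{(0)}}:S^{(0)}\to G^{(0)}$ disintegrating $\mu_S^{(0)}$ w.r.t. $\mu_G^{(0)}$ and a locally finite, locally bounded BSM $\gamma_q^\bullet$ on $q|_{T^{(0)}}:T^{(0)}\to G^{(0)}$ disintegrating $\mu_T^{(0)}$ w.r.t. $\mu_G^{(0)}$. For such a pair, $\eta^x=\gamma_p^{r_G(x)}\times\delta_x\times\gamma_q^{d_G(x)}$ ($x\in G$) as a measure on $P^{(0)}$, and $\mu_P^{(0)}(B)=\int_G\eta^x(B)\,d\mu_G(x)$ for Borel $B\subseteq P^{(0)}$. *)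

From HB Require Import structures.
From mathcomp Require Import all_boot all_algebra.
From mathcomp Require Import all_classical all_reals all_analysis.
From mathcomp Require Import measurable_realfun lebesgue_measure.
Import GRing.Theory Num.Theory.

Set Implicit Arguments.
Unset Strict Implicit.
Unset Printing Implicit Defensive.

Local Open Scope classical_set_scope.
Local Open Scope ring_scope.

Definition Borel (X : ptopologicalType) := g_sigma_algebraType (@open X).

Record groupoid_ops (X : Type) := GroupoidOps {
  gunit : set X;
  grng  : X -> X;
  gsrc  : X -> X;
  gmul  : X -> X -> X;    (* composition, defined when d x = r y *)
  ginv  : X -> X }.

Definition is_groupoid (X : Type) (g : groupoid_ops X) : Prop :=
  [/\ (forall x, gunit g (grng g x) /\ gunit g (gsrc g x)) /\
      (forall u, gunit g u -> grng g u = u /\ gsrc g u = u),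
      (forall x y, gsrc g x = grng g y ->
         grng g (gmul g x y) = grng g x /\ gsrc g (gmul g x y) = gsrc g y),
      (forall x y z, gsrc g x = grng g y -> gsrc g y = grng g z ->
         gmul g (gmul g x y) z = gmul g x (gmul g y z)),
      (forall x, gmul g (grng g x) x = x /\ gmul g x (gsrc g x) = x) &
      (forall x, [/\ grng g (ginv g x) = gsrc g x, gsrc g (ginv g x) = grng g x,
                     gmul g x (ginv g x) = grng g x &
                     gmul g (ginv g x) x = gsrc g x])].

Definition composable (X : Type) (g : groupoid_ops X) : set (X * X) :=
  [set z | gsrc g z.1 = grng g z.2].

Definition is_lch_topological_groupoid (X : ptopologicalType) (g : groupoid_ops X) : Prop :=
  [/\ is_groupoid g /\
      {within composable g, continuous (fun z : X * X => gmul g z.1 z.2)},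
      continuous (ginv g),
      @second_countable X,
      locally_compact [set: X] &
      hausdorff_space X].

Definition Cc_nonneg (R : realType) (X : ptopologicalType) (f : X -> R) : Prop :=
  [/\ continuous (f : X -> R^o), (forall x, 0 <= f x) &
      compact (closure [set x | f x != 0])].

Definition is_left_haar_system (R : realType) (X : ptopologicalType)
    (g : groupoid_ops X) (lam : X -> {measure set (Borel X) -> \bar R}) : Prop :=
  [/\
      (forall u, gunit g u -> lam u (~` (grng g @^-1` [set u])) = 0%E),
      (forall f : X -> R, Cc_nonneg f ->
         (forall u, gunit g u -> (\int[lam u]_x (f x)%:E < +oo)%E) /\
         {within gunit g, continuous ((fun u => fine (\int[lam u]_x (f x)%:E)) : X -> R^o)}),
      (forall (x : X) (E : set (Borel X)), measurable E ->
         lam (gsrc g x) E =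
         lam (grng g x) (gmul g x @` (E `&` grng g @^-1` [set gsrc g x]))) &
      (forall u (U : set X), gunit g u -> open U ->
         U `&` grng g @^-1` [set u] !=set0 -> (0 < lam u U)%E)].

Definition induced_measure (R : realType) (X : ptopologicalType)
    (g : groupoid_ops X) (lam : X -> {measure set (Borel X) -> \bar R})
    (mu0 : {measure set (Borel X) -> \bar R}) : set X -> \bar R :=
  fun E => (\int[mu0]_(u in gunit g) lam u E)%E.

(* Haar groupoid (G, lam, mu0); mu0 is a measure on G^(0), represented as a
   Borel measure on G concentrated on the (closed) unit space G^(0). *)
Definition is_haar_groupoid (R : realType) (X : ptopologicalType)
    (g : groupoid_ops X) (lam : X -> {measure set (Borel X) -> \bar R})
    (mu0 : {measure set (Borel X) -> \bar R}) : Prop :=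
  [/\ is_lch_topological_groupoid g /\
      is_left_haar_system g lam,
      mu0 (~` gunit g) = 0%E,
      (* Radon: locally finite on G^(0) *)
      (forall u, gunit g u -> exists U : set X,
          [/\ open U, U u & (mu0 U < +oo)%E]),
      mu0 [set: X] != 0%E &
      (forall E : set (Borel X), measurable E ->
         induced_measure g lam mu0 E = 0%E <->
         induced_measure g lam mu0 (ginv g @^-1` E) = 0%E)].

Definition is_haar_hom (R : realType) (S G : ptopologicalType)
    (gS : groupoid_ops S) (lamS : S -> {measure set (Borel S) -> \bar R})
    (muS0 : {measure set (Borel S) -> \bar R})
    (gG : groupoid_ops G) (lamG : G -> {measure set (Borel G) -> \bar R})
    (muG0 : {measure set (Borel G) -> \bar R}) (p : S -> G) : Prop :=
  [/\ continuous p,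
      (forall x y, gsrc gS x = grng gS y ->
         p (gmul gS x y) = gmul gG (p x) (p y)) &
      (forall E : set (Borel G), measurable E ->
         induced_measure gS lamS muS0 (p @^-1` E) = 0%E <->
         induced_measure gG lamG muG0 E = 0%E)].

Definition is_lflb_bsm (R : realType) (S G : ptopologicalType)
    (gS : groupoid_ops S) (gG : groupoid_ops G) (p : S -> G)
    (gam : G -> {measure set (Borel S) -> \bar R}) : Prop :=
  [/\
      (forall y, gunit gG y -> gam y (~` (gunit gS `&` p @^-1` [set y])) = 0%E),
      (forall E : set (Borel S), measurable E ->
         measurable_fun (gunit gG : set (Borel G)) (fun y : Borel G => gam y E)),
      (forall s, gunit gS s -> exists U : set S,
          [/\ open U, U s & forall y, gunit gG y -> (gam y U < +oo)%E]) &
      (forall s, gunit gS s -> exists U : set S, exists C : R,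
          [/\ open U, U s & forall y, gunit gG y -> (gam y U < C%:E)%E])].

Definition is_disintegration (R : realType) (S G : ptopologicalType)
    (gG : groupoid_ops G) (gam : G -> {measure set (Borel S) -> \bar R})
    (muS0 : {measure set (Borel S) -> \bar R})
    (muG0 : {measure set (Borel G) -> \bar R}) : Prop :=
  forall E : set (Borel S), measurable E ->
    muS0 E = (\int[muG0]_(y in gunit gG) gam y E)%E.

Definition admissible_pair (R : realType) (S G T : ptopologicalType)
    (gS : groupoid_ops S) (muS0 : {measure set (Borel S) -> \bar R})
    (gG : groupoid_ops G) (muG0 : {measure set (Borel G) -> \bar R})
    (gT : groupoid_ops T) (muT0 : {measure set (Borel T) -> \bar R})
    (p : S -> G) (q : T -> G)
    (gp : G -> {measure set (Borel S) -> \bar R})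
    (gq : G -> {measure set (Borel T) -> \bar R}) : Prop :=
  [/\ is_lflb_bsm gS gG p gp, is_disintegration gG gp muS0 muG0,
      is_lflb_bsm gT gG q gq & is_disintegration gG gq muT0 muG0].

Definition P0 (S G T : Type) (gS : groupoid_ops S) (gG : groupoid_ops G)
    (gT : groupoid_ops T) (p : S -> G) (q : T -> G) : set ((S * G) * T) :=
  [set z | [/\ gunit gS z.1.1, gunit gT z.2,
              grng gG z.1.2 = p z.1.1 & gsrc gG z.1.2 = q z.2]].

Definition SGT (S G T : ptopologicalType) := ((Borel S * Borel G) * Borel T)%type.

(* eta^x(B) = (gam_p^{r(x)} x delta_x x gam_q^{d(x)})(B), the product measure
   evaluated as an iterated integral *)
Definition eta_meas (R : realType) (S G T : ptopologicalType)
    (gG : groupoid_ops G)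
    (gp : G -> {measure set (Borel S) -> \bar R})
    (gq : G -> {measure set (Borel T) -> \bar R})
    (x : G) (B : set (SGT S G T)) : \bar R :=
  (\int[gp (grng gG x)]_s \int[gq (gsrc gG x)]_t (\1_B ((s, x), t) : R)%:E)%E.

Definition muP0 (R : realType) (S G T : ptopologicalType)
    (gG : groupoid_ops G) (muG : {measure set (Borel G) -> \bar R})
    (gp : G -> {measure set (Borel S) -> \bar R})
    (gq : G -> {measure set (Borel T) -> \bar R})
    (B : set (SGT S G T)) : \bar R :=
  (\int[muG]_x eta_meas gG gp gq x B)%E.

From HB Require Import structures.
From mathcomp Require Import all_boot all_algebra.
From mathcomp Require Import all_classical all_reals all_analysis.
From mathcomp Require Import measurable_realfun lebesgue_measure.
Import mathcomp.order.order.Order.TTheory GRing.Theory Num.Theory.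
Local Open Scope classical_set_scope.
Local Open Scope ring_scope.

(* Two disintegrations of mu_S^(0) over mu_G^(0) coincide at mu_G^(0)-almost
   every unit: they give the same integrals over every Borel set of units, hence
   agree almost everywhere on each member of a countable pi-system generating the
   Borel sets, once restricted to one of countably many open sets on which both
   are uniformly bounded (local boundedness and second countability).  The
   exceptional null set N of units pulls back under r to a mu_G-null set because
   each lambda^u lives on r^-1(u), and under d = r o inv by quasi-invariance; off
   these two sets eta^x and its counterpart for the other pair coincide. *)

Lemma continuous_grng {X : ptopologicalType} {g : groupoid_ops X} :
  is_lch_topological_groupoid g -> continuous (grng g).
Proof.
case=> -[[[_ _] _ _ _ Hinv] Hmul] cinv _ _ _ x.
have compo y : composable g (y, ginv g y) by rewrite /composable /=; case: (Hinv y).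
have -> : grng g = (fun z : X * X => gmul g z.1 z.2) \o (fun y => (y, ginv g y)).
  by apply: funext => y /=; case: (Hinv y).
move/subspace_continuousP : Hmul => /(_ _ (compo x)) Hm.
apply: (cvg_comp _ _ _ Hm) => P /(cvg_pair (cvg_id) (cinv x)) HP.
exact: filterS (fun y Py => Py (compo y)) HP.
Qed.

Lemma gsrcE {X : Type} {g : groupoid_ops X} : is_groupoid g ->
  gsrc g = grng g \o ginv g.
Proof. by case=> _ _ _ _ Hinv; apply: funext => x /=; case: (Hinv x). Qed.

Lemma continuous_gsrc {X : ptopologicalType} {g : groupoid_ops X} :
  is_lch_topological_groupoid g -> continuous (gsrc g).
Proof.
move=> hg; have [[/gsrcE -> _] cinv _ _ _] := hg.
by move=> x; apply: continuous_comp; [exact: cinv | exact: continuous_grng].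
Qed.

Lemma closed_fixpoints (X : topologicalType) (f : X -> X) :
  hausdorff_space X -> continuous f -> closed [set x | f x = x].
Proof.
move=> hX cf x clx; apply: hX => A B nA nB.
have /clx [y [fy [Ay By]]] : nbhs x (f @^-1` A `&` B) by apply: filterI => //; exact: cf.
by exists y; split => //; rewrite -fy.
Qed.

Lemma gunitE {X : Type} {g : groupoid_ops X} : is_groupoid g ->
  gunit g = [set x | grng g x = x].
Proof.
case=> -[Hunit Hfix] _ _ _ _; apply/seteqP; split => x /=; first by case/Hfix.
by move=> <-; case: (Hunit x).
Qed.

Lemma closed_gunit {X : ptopologicalType} {g : groupoid_ops X} :
  is_lch_topological_groupoid g -> closed (gunit g).
Proof.
move=> hg; have cr := continuous_grng hg.
by case: hg => -[/gunitE -> _] _ _ _ hX; exact: closed_fixpoints.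
Qed.

Section Borel_sets.
Context {X : ptopologicalType}.

Lemma open_Borel {A : set X} : open A -> measurable (A : set (Borel X)).
Proof. exact: sub_sigma_algebra. Qed.

Lemma closed_Borel {A : set X} : closed A -> measurable (A : set (Borel X)).
Proof.
by move=> cA; rewrite -(setCK A); apply: measurableC; apply: open_Borel; exact: closed_openC.
Qed.

Lemma set1_Borel (x : X) : hausdorff_space X -> measurable ([set x] : set (Borel X)).
Proof.
by move=> hX; apply: closed_Borel; exact/accessible_closed_set1/hausdorff_accessible.
Qed.

Lemma preimage_continuous_Borel {Y : ptopologicalType} {f : X -> Y} {E : set (Borel Y)} :
  continuous f -> measurable E -> measurable (f @^-1` E : set (Borel X)).
Proof.
move=> cf mE; rewrite -[X in measurable X]setTI.
apply: (@measurability _ _ (Borel X) (Borel Y) setT f (@open Y)) => //.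
by move=> _ [U oU <-]; rewrite setTI; apply: open_Borel; move/continuousP: cf; apply.
Qed.

End Borel_sets.

Lemma second_countable_seq_base {X : ptopologicalType} : @second_countable X ->
  exists e : nat -> set X, (forall n, open (e n)) /\
    forall (U : set X) x, open U -> U x -> exists n, e n x /\ e n `<=` U.
Proof.
case=> B cB [Bo Bb]; have [f finj] := countable_injP _ cB.
pose e n := if pselect (exists b, B b /\ f b = n) is left H then projT1 (cid H) else set0.
have eB b : B b -> e (f b) = b.
  move=> Bb'; rewrite /e; case: pselect => [H|]; last by case; exists b.
  by case: (cid H) => b' [Bb'' fb] /=; apply: finj => //; exact: mem_set.
exists e; split.
  move=> n; rewrite /e; case: pselect => [H|_]; last exact: open0.
  by case: (cid H) => b' [Bb'' _] /=; exact: Bo.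
move=> U x oU Ux; have /(Bb x) [V [BV Vx] VU] : nbhs x U by exact: open_nbhs_nbhs.
by exists (f V); rewrite eB.
Qed.

Lemma second_countable_open_cover {X : ptopologicalType} (P : set X -> Prop) {D : set X} :
  @second_countable X -> P set0 ->
  (forall U V, open U -> open V -> V `<=` U -> P U -> P V) ->
  (forall x, D x -> exists U, [/\ open U, U x & P U]) ->
  exists V : nat -> set X,
    [/\ forall k, open (V k), forall k, P (V k) & D `<=` \bigcup_k V k].
Proof.
move=> /second_countable_seq_base [e [eo eb]] P0 PS Ploc.
exists (fun k => if pselect (P (e k)) is left _ then e k else set0); split.
- by move=> k; case: pselect => _ //; exact: open0.
- by move=> k; case: pselect.
- move=> x /Ploc [U [oU Ux PU]]; have [k [ekx ekU]] := eb U x oU Ux.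
  by exists k => //; case: pselect => // -[]; exact: PS PU.
Qed.

Definition finite_meets {X : Type} (e : nat -> set X) (l : seq nat) : set X :=
  \big[setI/setT]_(n <- l) e n.

Lemma setI_closed_finite_meets {X : Type} (e : nat -> set X) :
  setI_closed (range (finite_meets e)).
Proof.
by move=> _ _ [l1 _ <-] [l2 _ <-]; exists (l1 ++ l2); rewrite // /finite_meets big_cat.
Qed.

Lemma open_finite_meets {X : ptopologicalType} (e : nat -> set X) l :
  (forall n, open (e n)) -> open (finite_meets e l).
Proof. by move=> eo; apply: big_ind => //; [exact: openT | exact: openI]. Qed.

Lemma Borel_finite_meets {X : ptopologicalType} {e : nat -> set X} :
  (forall n, open (e n)) ->
  (forall (U : set X) x, open U -> U x -> exists n, e n x /\ e n `<=` U) ->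
  @measurable _ (Borel X) = <<s range (finite_meets e) >>.
Proof.
move=> eo eb; apply/seteqP; split.
  apply: smallest_sub; first exact: smallest_sigma_algebra.
  move=> U oU.
  have -> : U = \bigcup_n (if pselect (e n `<=` U) is left _ then e n else set0).
    apply/seteqP; split => [x Ux|x [n _]]; last by case: pselect => // H /H.
    by have [n [enx enU]] := eb U x oU Ux; exists n => //; case: pselect.
  apply: sigma_algebra_bigcup => n; case: pselect => _; last exact: sigma_algebra0.
  by apply: sub_sigma_algebra; exists [:: n]; rewrite // /finite_meets big_seq1.
apply: smallest_sub; first exact: sigma_algebra_measurable.
by move=> _ [l _ <-]; apply: open_Borel; exact: open_finite_meets.
Qed.

Section measure_null_sets.
Local Open Scope ereal_scope.
Context {d} {T : measurableType d} {R : realType} (mu : {measure set T -> \bar R}).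
Import HBNNSimple.

(* Zeroing a simple function on the null set [N] keeps it below [F2] and
   does not change its integral. *)
Let sintegral_sup_le_off_null (N : set T) (F1 F2 : T -> \bar R) :
  measurable N -> mu N = 0 ->
  (forall x, ~ N x -> F1 x = F2 x) -> (forall x, 0 <= F2 x) ->
  ereal_sup [set sintegral mu h | h in [set h : {nnsfun T >-> R} | forall x, (h x)%:E <= F1 x]]
  <= ereal_sup [set sintegral mu h | h in [set h : {nnsfun T >-> R} | forall x, (h x)%:E <= F2 x]].
Proof.
move=> mN N0 F12 F20; apply: ge_ereal_sup => _ [h hF1 <-].
apply: le_ereal_sup_tmp; exists (sintegral mu (proj_nnsfun h (measurableC mN))); last first.
  rewrite -!integralT_nnsfun le_eqVlt; apply/orP; left; apply/eqP.
  apply: ae_eq_integral => //.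
  - by apply/measurable_EFinP; exact: measurable_funPT.
  - by apply/measurable_EFinP; exact: measurable_funPT.
  - exists N; split => // x /= H; apply: contrapT => Nx; apply: H => _.
    by rewrite /= mindicE /= mem_set // mulr1.
exists (proj_nnsfun h (measurableC mN)) => // x; rewrite /= mindicE.
have [Nx|Nx] := pselect (N x); first by rewrite memNset // ?mulr0.
by rewrite mem_set // mulr1 -F12.
Qed.

(* Unlike [ae_eq_integral], no measurability of [f] and [g] is required:
   [x |-> eta^x(B)] is not known to be measurable. *)
Lemma integral_eq_off_null {N : set T} (f g : T -> \bar R) :
  measurable N -> mu N = 0 -> (forall x, ~ N x -> f x = g x) ->
  \int[mu]_x f x = \int[mu]_x g x.
Proof.
move=> mN N0 fg; rewrite /integral; congr (_ - _); apply/eqP; rewrite eq_le;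
  apply/andP; split; apply: (sintegral_sup_le_off_null _ _ _ mN N0) => // x;
  by rewrite ?patch_setT /= ?funepos_ge0 ?funeneg_ge0 // => Nx;
     rewrite ?funeposE ?funenegE /= fg.
Qed.

Lemma measure_setI_null_diff {A X Z : set T} :
  measurable A -> measurable X -> measurable Z -> mu Z = 0 ->
  A `\` X `<=` Z -> mu A = mu (A `&` X).
Proof.
move=> mA mX mZ Z0 AXZ; rewrite (measureDI mu mA mX).
by rewrite (subset_measure0 _ mZ AXZ Z0) ?add0e //; exact: measurableD.
Qed.

End measure_null_sets.

Lemma measure_eq_on_cover {d} {T : measurableType d} {R : realType}
    {E : set (set T)} {W : nat -> set T} {K : set T}
    {mu nu : {measure set T -> \bar R}} :
  measurable = <<s E >> -> setI_closed E -> E setT ->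
  (forall i, measurable (W i)) -> (forall i, (mu (W i) < +oo)%E) ->
  measurable K -> K `<=` \bigcup_i W i -> mu (~` K) = 0%E -> nu (~` K) = 0%E ->
  (forall i A, E A -> mu (A `&` W i) = nu (A `&` W i)) ->
  forall A, measurable A -> mu A = nu A.
Proof.
move=> EB EI ET mW Wfin mK KW muK nuK EW A mA.
have eqW i B : measurable B -> mu (B `&` W i) = nu (B `&` W i).
  apply: (measure_unique E (fun _ => setT) EB EI _ _ (mrestr mu (mW i)) (mrestr nu (mW i))) => //.
  - by apply/seteqP; split => // x _; exists 0%N.
  - by move=> B' /EW; exact.
  - by move=> _; change (mu (setT `&` W i) < +oo)%E; rewrite setTI.
have mKC : measurable (~` K) by exact: measurableC.
have mU : measurable (\bigcup_i W i) by exact: bigcup_measurable.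
have AWK : A `\` \bigcup_i W i `<=` ~` K by move=> s [_ nW] /KW.
rewrite (measure_setI_null_diff mu mA mU mKC muK AWK).
rewrite (measure_setI_null_diff nu mA mU mKC nuK AWK).
have mAW n : measurable (A `&` seqDU W n) by apply: measurableI => //; exact: seqDU_measurable.
have tAW : trivIset setT (fun n => A `&` seqDU W n).
  by apply: trivIset_setIl; exact: trivIset_seqDU.
rewrite seqDU_bigcup_eq setI_bigcupr !measure_bigcup //.
apply: eq_eseriesr => n _.
have -> : A `&` seqDU W n = A `&` seqDU W n `&` W n.
  by rewrite [RHS]setIidl // => s [_ h]; exact: subset_seqDU h.
exact: eqW.
Qed.

Lemma second_countable_finite_open_cover {X : ptopologicalType} {R : realType}
    (mu : {measure set (Borel X) -> \bar R}) {D : set X} :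
  @second_countable X -> (forall x, D x -> exists U, [/\ open U, U x & (mu U < +oo)%E]) ->
  exists V : nat -> set X,
    [/\ forall k, open (V k), forall k, (mu (V k) < +oo)%E & D `<=` \bigcup_k V k].
Proof.
move=> scX; apply: (second_countable_open_cover (fun U => mu U < +oo)%E scX).
  by rewrite measure0.
move=> U V oU oV VU; apply: le_lt_trans.
exact: le_measure (mem_set (open_Borel oV)) (mem_set (open_Borel oU)) VU.
Qed.

Section disintegration_uniqueness.
Local Open Scope ereal_scope.
Context {R : realType} {S G : ptopologicalType} {gS : groupoid_ops S}
  {gG : groupoid_ops G} {p : S -> G}
  {muS0 : {measure set (Borel S) -> \bar R}}
  {mu0 : {measure set (Borel G) -> \bar R}}.
Hypotheses (hS : is_lch_topological_groupoid gS)
  (hG : is_lch_topological_groupoid gG) (pc : continuous p).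

Local Notation G0 := (gunit gG : set (Borel G)).

Let mG0 : measurable G0.
Proof. exact: closed_Borel (closed_gunit hG). Qed.

Let mfiber y : measurable (gunit gS `&` p @^-1` [set y] : set (Borel S)).
Proof.
apply: measurableI; first exact: closed_Borel (closed_gunit hS).
by apply: preimage_continuous_Borel pc _; apply: set1_Borel; case: hG.
Qed.

Lemma disintegration_setI_preimage (gam : G -> {measure set (Borel S) -> \bar R})
    (A : set (Borel S)) (E : set (Borel G)) :
  is_lflb_bsm gS gG p gam -> is_disintegration gG gam muS0 mu0 ->
  measurable A -> measurable E -> E `<=` G0 ->
  muS0 (A `&` p @^-1` E) = \int[mu0]_(y in E) gam y A.
Proof.
case=> conc _ _ _ Hd mA mE EG0.
have mpE := preimage_continuous_Borel pc mE.
have mfiberC y := measurableC (mfiber y).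
rewrite Hd; last exact: measurableI.
rewrite -[in RHS](setIidr EG0) integral_mkcondr.
apply: eq_integral => y /[1!inE] G0y; rewrite patchE; case: ifPn => [/set_mem Ey|Ey].
  rewrite [RHS](measure_setI_null_diff _ mA mpE (mfiberC y) (conc y G0y)) //.
  by move=> s [As /= pE] [_ /= py]; apply: pE; rewrite py.
apply: (subset_measure0 _ (mfiberC y) _ (conc y G0y)); first exact: measurableI.
by move=> s [As /= pE] [_ /= py]; move: Ey; rewrite -py => /negP; apply; exact: mem_set.
Qed.

(* Both disintegrations have the same integrals over Borel sets of units, so
   where they are integrable they agree almost everywhere. *)
Lemma disintegration_ae_eq {gam gam' : G -> {measure set (Borel S) -> \bar R}}
    {A : set (Borel S)} {V : set (Borel G)} (C : R) :
  is_lflb_bsm gS gG p gam -> is_disintegration gG gam muS0 mu0 ->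
  is_lflb_bsm gS gG p gam' -> is_disintegration gG gam' muS0 mu0 ->
  measurable A -> measurable V -> mu0 V < +oo ->
  (forall y, G0 y -> gam y A < C%:E /\ gam' y A < C%:E) ->
  ae_eq mu0 (G0 `&` V) (fun y => gam y A) (fun y => gam' y A).
Proof.
move=> Hb Hd Hb' Hd' mA mV Vfin bound.
have mD : measurable (G0 `&` V) by exact: measurableI.
have mf : measurable_fun (G0 `&` V) (fun y => gam y A).
  by apply: (measurable_funS mG0 (@subIsetl _ _ _)); case: Hb => _ Hm _ _; exact: Hm.
have mf' : measurable_fun (G0 `&` V) (fun y => gam' y A).
  by apply: (measurable_funS mG0 (@subIsetl _ _ _)); case: Hb' => _ Hm _ _; exact: Hm.
have C0 : 0 <= (Num.max C 0)%:E by rewrite lee_fin le_max lexx orbT.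
apply: integral_ae_eq => //; last first.
  by move=> E ED mE; rewrite -!disintegration_setI_preimage // => y /ED [].
apply/integrableP; split => //.
apply: (le_lt_trans (integral_le_bound (Num.max C 0)%:E mD mf C0 _)).
  apply: aeW => y [G0y _]; rewrite gee0_abs //.
  by apply: (le_trans (ltW (bound y G0y).1)); rewrite lee_fin le_max lexx.
apply: lte_mul_pinfty => //; apply: le_lt_trans Vfin.
by apply: le_measure; rewrite ?inE.
Qed.

Lemma lflb_bsm_bounded_open_cover {gam gam' : G -> {measure set (Borel S) -> \bar R}} :
  is_lflb_bsm gS gG p gam -> is_lflb_bsm gS gG p gam' ->
  exists W : nat -> set S, [/\ forall i, open (W i),
    forall i, exists C : R, forall y, G0 y -> gam y (W i) < C%:E /\ gam' y (W i) < C%:E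
    & gunit gS `<=` \bigcup_i W i].
Proof.
move=> [_ _ _ bnd] [_ _ _ bnd'].
have scS : @second_countable S by case: hS.
apply: (second_countable_open_cover (fun U => exists C : R, forall y, G0 y ->
  gam y U < C%:E /\ gam' y U < C%:E) scS).
- by exists 1%R => y _; rewrite !measure0 !lte_fin ltr01.
- move=> U U' oU oU' U'U [C bC].
  have [mU mU'] := (mem_set (open_Borel oU), mem_set (open_Borel oU')).
  exists C => y /bC[lt lt']; split.
    exact: le_lt_trans (le_measure _ mU' mU U'U) lt.
  exact: le_lt_trans (le_measure _ mU' mU U'U) lt'.
move=> s /[dup] /bnd [U [C [oU Us UC]]] /bnd' [U' [C' [oU' Us' UC']]].
have mUU' : measurable (U `&` U' : set (Borel S)) by exact: open_Borel (openI oU oU').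
exists (U `&` U'); split => //; first exact: openI.
exists (Num.max C C') => y G0y; split.
  apply: le_lt_trans (lt_le_trans (UC y G0y) _); last by rewrite lee_fin le_max lexx.
  by apply: le_measure; rewrite ?inE //; exact: open_Borel.
apply: le_lt_trans (lt_le_trans (UC' y G0y) _); last by rewrite lee_fin le_max lexx orbT.
by apply: le_measure; rewrite ?inE //; exact: open_Borel.
Qed.

Lemma disintegration_ae_unique {gam gam' : G -> {measure set (Borel S) -> \bar R}} :
  is_lflb_bsm gS gG p gam -> is_disintegration gG gam muS0 mu0 ->
  is_lflb_bsm gS gG p gam' -> is_disintegration gG gam' muS0 mu0 ->
  (forall u, G0 u -> exists U : set G, [/\ open U, U u & mu0 U < +oo]) ->
  exists N : set (Borel G), [/\ measurable N, mu0 N = 0 &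
    forall y, G0 y -> ~ N y -> forall A : set (Borel S), measurable A ->
      gam y A = gam' y A].
Proof.
move=> Hb Hd Hb' Hd' mu0_loc.
have scG : @second_countable G by case: hG.
have scS : @second_countable S by case: hS.
have [V [oV Vfin G0V]] := second_countable_finite_open_cover mu0 scG mu0_loc.
have [W [oW Wb S0W]] := lflb_bsm_bounded_open_cover Hb Hb'.
have [eS [eSo eSb]] := second_countable_seq_base scS.
(* [F] enumerates the countable pi-system of finite meets of the base. *)
pose F n := finite_meets eS (odflt [::] (unpickle n)).
have mF n : measurable (F n : set (Borel S)) by exact: open_Borel (open_finite_meets _ _ eSo).
have mW i : measurable (W i : set (Borel S)) by exact: open_Borel.
have : \forall y \ae mu0, forall i n, G0 y -> gam y (F n `&` W i) = gam' y (F n `&` W i).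
  apply: ae_foralln => i; apply: ae_foralln => n; have [C bC] := Wb i.
  have : \forall y \ae mu0, forall k, (G0 `&` V k) y ->
      gam y (F n `&` W i) = gam' y (F n `&` W i).
    apply: ae_foralln => k.
    apply: (disintegration_ae_eq C Hb Hd Hb' Hd' (measurableI _ _ (mF n) (mW i))
      (open_Borel (oV k)) (Vfin k)) => y /bC[lt lt']; split.
      by apply: le_lt_trans lt; apply: le_measure; rewrite ?inE //; exact: measurableI.
    by apply: le_lt_trans lt'; apply: le_measure; rewrite ?inE //; exact: measurableI.
  by apply: filterS => y eqV G0y; have [k _ Vky] := G0V y G0y; exact: eqV k (conj G0y Vky).
case=> N [mN N0 eqN]; exists N; split => // y G0y Ny.
have eqF i n : gam y (F n `&` W i) = gam' y (F n `&` W i).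
  by apply: contrapT => neq; apply: Ny; apply: eqN => /(_ i n G0y).
case: Hb => conc _ _ _; case: Hb' => conc' _ _ _.
apply: (measure_eq_on_cover (Borel_finite_meets eSo eSb) (setI_closed_finite_meets eS)
  _ mW _ (mfiber y) _ (conc y G0y) (conc' y G0y)).
- by exists [::]; rewrite // /finite_meets big_nil.
- by move=> i; have [C bC] := Wb i; exact: lt_trans (bC y G0y).1 (ltry _).
- by move=> s [/S0W].
- by move=> i _ [l _ <-]; have := eqF i (pickle l); rewrite /F pickleK.
Qed.

End disintegration_uniqueness.

Section induced_measure_null_sets.
Variables (R : realType) (X : ptopologicalType) (g : groupoid_ops X)
  (lam : X -> {measure set (Borel X) -> \bar R})
  (mu0 : {measure set (Borel X) -> \bar R}) (N : set (Borel X)).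
Hypotheses (mN : measurable N) (N0 : mu0 N = 0%E).

Lemma induced_measure_grng_null :
  is_lch_topological_groupoid g -> is_left_haar_system g lam ->
  induced_measure g lam mu0 (grng g @^-1` N) = 0%E.
Proof.
move=> hg [conc _ _ _]; have cr := continuous_grng hg.
have hX : hausdorff_space X by case: hg.
rewrite /induced_measure integral_mkcond.
rewrite (integral_eq_off_null mu0 _ (cst 0%E) mN N0) ?integral0 // => u Nu.
rewrite patchE; case: ifPn => // /set_mem G0u.
apply: (subset_measure0 _ _ _ (conc u G0u)).
- exact: preimage_continuous_Borel cr mN.
- exact: measurableC (preimage_continuous_Borel cr (set1_Borel u hX)).
- by move=> x /= Nx rxu; apply: Nu; rewrite -rxu.
Qed.

Lemma induced_measure_gsrc_null :
  is_haar_groupoid g lam mu0 -> induced_measure g lam mu0 (gsrc g @^-1` N) = 0%E.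
Proof.
case=> -[hg hlam] _ _ _ qinv; have [[/gsrcE -> _] _ _ _ _] := hg.
have mrN := preimage_continuous_Borel (continuous_grng hg) mN.
by apply/(qinv _ mrN); exact: induced_measure_grng_null.
Qed.

End induced_measure_null_sets.

Lemma eq_eta_meas (R : realType) (S G T : ptopologicalType) (gG : groupoid_ops G)
    (gp gp' : G -> {measure set (Borel S) -> \bar R})
    (gq gq' : G -> {measure set (Borel T) -> \bar R}) (x : G) (B : set (SGT S G T)) :
  (forall A, measurable A -> gp' (grng gG x) A = gp (grng gG x) A) ->
  (forall A, measurable A -> gq' (gsrc gG x) A = gq (gsrc gG x) A) ->
  eta_meas gG gp' gq' x B = eta_meas gG gp gq x B.
Proof.
move=> eqp eqq; rewrite /eta_meas (eq_measure_integral (gp (grng gG x))) => [|A mA _].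
  apply: eq_integral => s _; rewrite (eq_measure_integral (gq (gsrc gG x))) // => A mA _.
  exact: eqq.
exact: eqp.
Qed.

Theorem proposition5p7 (R : realType) (S G T : ptopologicalType)
    (gS : groupoid_ops S) (lamS : S -> {measure set (Borel S) -> \bar R})
    (muS0 : {measure set (Borel S) -> \bar R})
    (gG : groupoid_ops G) (lamG : G -> {measure set (Borel G) -> \bar R})
    (muG0 : {measure set (Borel G) -> \bar R})
    (gT : groupoid_ops T) (lamT : T -> {measure set (Borel T) -> \bar R})
    (muT0 : {measure set (Borel T) -> \bar R})
    (HS : is_haar_groupoid gS lamS muS0)
    (HG : is_haar_groupoid gG lamG muG0)
    (HT : is_haar_groupoid gT lamT muT0)
    (p : S -> G) (q : T -> G)
    (Hp : is_haar_hom gS lamS muS0 gG lamG muG0 p)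
    (Hq : is_haar_hom gT lamT muT0 gG lamG muG0 q)
    (muG : {measure set (Borel G) -> \bar R})
    (HmuG : forall E : set (Borel G), measurable E ->
              muG E = induced_measure gG lamG muG0 E)
    (gp gp' : G -> {measure set (Borel S) -> \bar R})
    (gq gq' : G -> {measure set (Borel T) -> \bar R})
    (Hadm : admissible_pair gS muS0 gG muG0 gT muT0 p q gp gq)
    (Hadm' : admissible_pair gS muS0 gG muG0 gT muT0 p q gp' gq')
    (B : set (SGT S G T)) (mB : measurable B)
    (BP : B `<=` P0 gS gG gT p q) :
  muP0 gG muG gp' gq' B = muP0 gG muG gp gq B.
Proof.
have [[hG hlam] _ mu0_loc _ _] := HG.
have [[hS _] _ _ _ _] := HS; have [[hT _] _ _ _ _] := HT.
have [pc _ _] := Hp; have [qc _ _] := Hq.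
have [Hbp Hdp Hbq Hdq] := Hadm; have [Hbp' Hdp' Hbq' Hdq'] := Hadm'.
have [NS [mNS NS0 eqS]] := disintegration_ae_unique hS hG pc Hbp' Hdp' Hbp Hdp mu0_loc.
have [NT [mNT NT0 eqT]] := disintegration_ae_unique hT hG qc Hbq' Hdq' Hbq Hdq mu0_loc.
pose N := NS `|` NT.
have mN : measurable N by exact: measurableU.
have N0 : muG0 N = 0%E by rewrite measureU0.
have mrN := preimage_continuous_Borel (continuous_grng hG) mN.
have mdN := preimage_continuous_Borel (continuous_gsrc hG) mN.
pose Z := grng gG @^-1` N `|` gsrc gG @^-1` N.
have Z0 : muG Z = 0%E.
  rewrite measureU0 ?HmuG //; first exact: induced_measure_grng_null.
  exact: induced_measure_gsrc_null.
rewrite /muP0; apply: (integral_eq_off_null muG _ _ (measurableU _ _ mrN mdN) Z0) => x Zx.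
have [[[[G0 _] _ _ _ _] _] _ _ _ _] := hG.
have [G0r G0d] := G0 x.
apply: eq_eta_meas => A mA.
  by apply: eqS => // H; apply: Zx; left; left.
by apply: eqT => // H; apply: Zx; right; right.
Qed.
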